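(* The operator $\frac1\lambda P$ maps $\Delta_f$ into itself.
   Context: Let $I=[0,1)$ carry a metric $d_I$, fix $\theta\in(0,1)$, and let $\Omega=I^{\mathbb Z}$ with metric $d(x,y)=\sup_{k\in\mathbb Z}\theta^{|k|}d_I(x_k,y_k)$. Let $\tau:I\to I$ have full branches, so that $b=\#\tau^{-1}(t)$ is constant; let $p_\tau$ be a fixed point of $\tau$. Assume there is $\eta\in(0,1)$ such that every inverse branch $\zeta$ of $\tau$ satisfies $d_I(\zeta(s),\zeta(t))\le\eta\,d_I(s,t)$. Let $(\bar\tau x)_i=\tau(x_i)$. Let $\pi_k:\Omega\to\Omega$ keep the coordinates $|i|\le k$ and set the others to $p_\tau$; $\Phi_k=\Phi\circ\pi_k$. Fix $\beta\in(0,1]$; $|\Phi|_\infty=\sup|\Phi|$, $|\Phi|_\beta=\sup_{k\in\mathbb N}\sup_{x\neq y}|\Phi_k(x)-\Phi_k(y)|/d(x,y)^\beta$, $\|\Phi\|=|\Phi|_\infty+|\Phi|_\beta$, $\mathcal C=\{\Phi\in C(\Omega):\|\Phi\|<\infty\}$. An inverse branch of order $k$ is a choice $\zeta=(\zeta_j)_{|j|\le k}$ of inverse branches of $\tau$, with $(\zeta_x)_j=\zeta_j(x_j)$ for $|j|\le k$, $(\zeta_x)_j=x_j$ otherwise; $b_k=b^{2k+1}$. For real $f\in\mathcal C$, $P_k\Phi(x)=b_k^{-1}\sum_{|\zeta|=k}e^{f(\pi_k\zeta_x)}\Phi(\pi_k\zeta_x)$ and $P\Phi=\lim_kP_k\Phi$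 pointwise. Fix a Borel probability measure $\nu_0$ on $\Omega$ with $P^*\nu_0=\lambda\nu_0$, where $\lambda=\int P\mathbf 1\,d\nu_0$ (such exists). Put $B(z)=\exp\!\left(|f|_\beta\frac{\eta^\beta}{1-\eta^\beta}z^\beta\right)$ for $z\ge0$ and $\Delta_f=\{\Phi\in C(\Omega):\Phi\ge0,\ \nu_0(\Phi)=1,\ \Phi(x)\le B(d(x,y))\Phi(y)\ \forall x,y\in\Omega\}$. *)

From Stdlib Require Import Reals Lra ZArith List Classical ClassicalEpsilon.
Open Scope R_scope.

Definition inI (t : R) : Prop := 0 <= t < 1.

Definition pt := Z -> R.
Definition inOmega (x : pt) : Prop := forall k : Z, inI (x k).

(* Supremum of a set of reals (meaningful when the least upper bound exists). *)
Definition Rsup (E : R -> Prop) : R :=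
  epsilon (inhabits 0) (fun r => is_lub E r).

Definition dOmega (dI : R -> R -> R) (theta : R) (x y : pt) : R :=
  Rsup (fun r => exists k : Z, r = theta ^ (Z.abs_nat k) * dI (x k) (y k)).

(* z^beta for z >= 0, with 0^beta = 0. *)
Definition rpow (z beta : R) : R :=
  if Rle_dec z 0 then 0 else Rpower z beta.

Definition pik (p : R) (k : nat) (x : pt) : pt :=
  fun i => if Z.leb (Z.abs i) (Z.of_nat k) then x i else p.

Definition contOmega (dI : R -> R -> R) (theta : R) (Phi : pt -> R) : Prop :=
  forall x, inOmega x -> forall eps, eps > 0 -> exists delta, delta > 0 /\
    forall y, inOmega y -> dOmega dI theta x y < delta -> Rabs (Phi y - Phi x) < eps.

Definition boundedOmega (Phi : pt -> R) : Prop :=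
  exists M, forall x, inOmega x -> Rabs (Phi x) <= M.

Definition holderQuot (dI : R -> R -> R) (theta beta p : R) (Phi : pt -> R) (r : R) : Prop :=
  r = 0 \/
  exists (k : nat) (x y : pt), inOmega x /\ inOmega y /\ (exists j, x j <> y j) /\
    r = Rabs (Phi (pik p k x) - Phi (pik p k y)) / rpow (dOmega dI theta x y) beta.

Definition holderSemi (dI : R -> R -> R) (theta beta p : R) (Phi : pt -> R) : R :=
  Rsup (holderQuot dI theta beta p Phi).

Definition inCspace (dI : R -> R -> R) (theta beta p : R) (Phi : pt -> R) : Prop :=
  contOmega dI theta Phi /\ boundedOmega Phi /\
  exists C, forall r, holderQuot dI theta beta p Phi r -> r <= C.

Fixpoint natsum (n : nat) (g : nat -> R) : R :=
  match n with O => 0 | S m => natsum m g + g m end.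

(* Sum of F c over all choices c : Z -> nat with c j < b for j in idx
   (c j := 0 for j not in idx). *)
Fixpoint sumChoices (b : nat) (idx : list Z) (F : (Z -> nat) -> R) : R :=
  match idx with
  | nil => F (fun _ => O)
  | j :: rest => natsum b (fun i =>
      sumChoices b rest (fun c => F (fun m => if Z.eq_dec m j then i else c m)))
  end.

Definition idxk (k : nat) : list Z :=
  map (fun i => Z.of_nat i - Z.of_nat k)%Z (seq 0 (2 * k + 1)).

(* pi_k zeta_x for the inverse branch of order k given by the choice c
   (branch br (c j) at coordinate j). *)
Definition branchPt (br : nat -> R -> R) (p : R) (k : nat) (c : Z -> nat) (x : pt) : pt :=
  pik p k (fun j => if Z.leb (Z.abs j) (Z.of_nat k) then br (c j) (x j) else x j).

Definition Pk (b : nat) (br : nat -> R -> R) (p : R) (f : pt -> R)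
    (k : nat) (Phi : pt -> R) (x : pt) : R :=
  / (INR b ^ (2 * k + 1)) *
  sumChoices b (idxk k)
    (fun c => exp (f (branchPt br p k c x)) * Phi (branchPt br p k c x)).

Definition openOmega (dI : R -> R -> R) (theta : R) (U : pt -> Prop) : Prop :=
  forall x, U x -> inOmega x /\ exists r, r > 0 /\
    forall y, inOmega y -> dOmega dI theta x y < r -> U y.

Inductive borel (dI : R -> R -> R) (theta : R) : (pt -> Prop) -> Prop :=
  | borel_open : forall U, openOmega dI theta U -> borel dI theta U
  | borel_compl : forall A, borel dI theta A ->
      borel dI theta (fun x => inOmega x /\ ~ A x)
  | borel_union : forall A : nat -> pt -> Prop, (forall n, borel dI theta (A n)) ->
      borel dI theta (fun x => exists n, A n x).

Definition probMeasure (dI : R -> R -> R) (theta : R) (nu : (pt -> Prop) -> R) : Prop :=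
  (forall A, borel dI theta A -> 0 <= nu A) /\
  nu inOmega = 1 /\
  (forall A : nat -> pt -> Prop, (forall n, borel dI theta (A n)) ->
     (forall n m x, n <> m -> A n x -> A m x -> False) ->
     infinite_sum (fun n => nu (A n)) (nu (fun x => exists n, A n x))).

Definition simpleBelow (dI : R -> R -> R) (theta : R) (nu : (pt -> Prop) -> R)
    (Phi : pt -> R) (s : R) : Prop :=
  exists (n : nat) (a : nat -> R) (A : nat -> pt -> Prop),
    (forall i, (i < n)%nat -> 0 <= a i /\ borel dI theta (A i)) /\
    (forall i j x, (i < n)%nat -> (j < n)%nat -> i <> j -> A i x -> A j x -> False) /\
    (forall x, inOmega x ->
       natsum n (fun i => a i * (if excluded_middle_informative (A i x) then 1 else 0))
       <= Phi x) /\
    s = natsum n (fun i => a i * nu (A i)).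

(* integral_Omega Phi dnu = c, for a nonnegative Borel measurable Phi
   (Lebesgue integral; here required to be finite). *)
Definition integralIs (dI : R -> R -> R) (theta : R) (nu : (pt -> Prop) -> R)
    (Phi : pt -> R) (c : R) : Prop :=
  (forall x, inOmega x -> 0 <= Phi x) /\
  (forall a, borel dI theta (fun x => inOmega x /\ a < Phi x)) /\
  is_lub (simpleBelow dI theta nu Phi) c.

Definition Bfun (fsemi eta beta z : R) : R :=
  exp (fsemi * (Rpower eta beta / (1 - Rpower eta beta)) * rpow z beta).

Definition inDelta (dI : R -> R -> R) (theta beta p eta : R) (f : pt -> R)
    (nu : (pt -> Prop) -> R) (Phi : pt -> R) : Prop :=
  contOmega dI theta Phi /\
  (forall x, inOmega x -> 0 <= Phi x) /\
  integralIs dI theta nu Phi 1 /\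
  (forall x y, inOmega x -> inOmega y ->
     Phi x <= Bfun (holderSemi dI theta beta p f) eta beta (dOmega dI theta x y) * Phi y).

From Stdlib Require Import Reals ZArith List.
From Stdlib Require Import Lra Lia FunctionalExtensionality PropExtensionality ClassicalEpsilon Classical.
Open Scope R_scope.

(* Call g : Omega -> R "B-Harnack" if g x <= B(d(x,y)) g y for all x, y.
   The heart of the proof is that P_k preserves this property.  For a single
   inverse branch zeta of order k the points pi_k zeta_x, pi_k zeta_y are at
   distance <= eta d(x,y), so the Hoelder bound on f gives
   f(zeta_x) - f(zeta_y) <= |f|_beta eta^beta d(x,y)^beta, while
   Phi(zeta_x) <= B(eta d(x,y)) Phi(zeta_y); the identity
   B(z) = exp(|f|_beta eta^beta z^beta) B(eta z) recombines the two factors.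
   Summing over branches and letting k -> oo, P Phi is B-Harnack and >= 0.

   The remaining facts are soft: a B-Harnack function of integral c is
   bounded by B(diam Omega) c; it is continuous since B(z) -> 1 as z -> 0;
   lambda >= exp(-|f|_oo) > 0 because P 1 >= exp(-|f|_oo); and the
   eigen-relation gives integral (P Phi) = lambda. *)

Lemma natsum_ext n g h : (forall i, (i < n)%nat -> g i = h i) -> natsum n g = natsum n h.
Proof.
  induction n as [|n IH]; simpl; intros H; auto.
  rewrite IH by (intros; apply H; lia). rewrite H by lia. reflexivity.
Qed.

Lemma natsum_le n g h : (forall i, (i < n)%nat -> g i <= h i) -> natsum n g <= natsum n h.
Proof.
  induction n as [|n IH]; simpl; intros H; [lra|].
  apply Rplus_le_compat; [apply IH; intros; apply H|apply H]; lia.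
Qed.

Lemma natsum_scal n a g : natsum n (fun i => a * g i) = a * natsum n g.
Proof. induction n as [|n IH]; simpl; [ring|]. rewrite IH; ring. Qed.

Lemma natsum_const n v : natsum n (fun _ => v) = INR n * v.
Proof. induction n as [|n IH]; simpl natsum; [simpl; ring|]. rewrite IH, S_INR; ring. Qed.

Definition validc (b : nat) (idx : list Z) (c : Z -> nat) : Prop :=
  forall j, In j idx -> (c j < b)%nat.

Lemma sumChoices_le b idx : forall F G, (forall c, validc b idx c -> F c <= G c) ->
  sumChoices b idx F <= sumChoices b idx G.
Proof.
  induction idx as [|j rest IH]; simpl; intros F G H.
  - apply H. intros j [].
  - apply natsum_le. intros i Hi. apply IH. intros c Hc. apply H.
    intros m Hm. destruct (Z.eq_dec m j); auto.
    destruct Hm as [<-|Hm]; [congruence|auto].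
Qed.

Lemma sumChoices_scal b idx : forall a F,
  sumChoices b idx (fun c => a * F c) = a * sumChoices b idx F.
Proof.
  induction idx as [|j rest IH]; simpl; intros a F; auto.
  rewrite <- natsum_scal. apply natsum_ext; intros. apply IH.
Qed.

Lemma sumChoices_const b idx v : sumChoices b idx (fun _ => v) = INR b ^ length idx * v.
Proof.
  revert v; induction idx as [|j rest IH]; simpl; intros v; [ring|].
  rewrite (natsum_ext _ _ (fun _ => INR b ^ length rest * v)) by (intros; apply IH).
  rewrite natsum_const; ring.
Qed.

Lemma sumChoices_lower b idx F m : (forall c, validc b idx c -> m <= F c) ->
  INR b ^ length idx * m <= sumChoices b idx F.
Proof. intros H. rewrite <- sumChoices_const. apply sumChoices_le. auto. Qed.

Lemma length_idxk k : length (idxk k) = (2 * k + 1)%nat.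
Proof. unfold idxk. rewrite length_map, length_seq. reflexivity. Qed.

Lemma In_idxk k j : (Z.abs j <= Z.of_nat k)%Z -> In j (idxk k).
Proof.
  intros H. unfold idxk. apply in_map_iff. exists (Z.to_nat (j + Z.of_nat k)). split.
  - rewrite Z2Nat.id by lia. lia.
  - apply in_seq. lia.
Qed.

Lemma cv_const (a : R) : Un_cv (fun _ => a) a.
Proof.
  intros e He. exists O. intros. unfold Rfunctions.R_dist.
  rewrite Rminus_diag, Rabs_R0; lra.
Qed.

Lemma cv_lower u l m : Un_cv u l -> (forall n, m <= u n) -> m <= l.
Proof. intros Hu H. exact (Rle_cv_lim H (cv_const m) Hu). Qed.

Lemma cv_le u v l1 l2 K : Un_cv u l1 -> Un_cv v l2 -> (forall n, u n <= K * v n) ->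
  l1 <= K * l2.
Proof.
  intros Hu Hv H. apply (Rle_cv_lim H Hu).
  apply (CV_mult (fun _ => K) v); [apply cv_const|apply Hv].
Qed.

Lemma pow_le1 t n : 0 <= t <= 1 -> t ^ n <= 1.
Proof. intros H; induction n; simpl; nra. Qed.

(* The metric d on Omega: its defining supremum exists because d_I is bounded
   by M, and then d is nonnegative, bounded by M and symmetric. *)

Definition dset (dI : R -> R -> R) (theta : R) (x y : pt) : R -> Prop :=
  fun r => exists k : Z, r = theta ^ (Z.abs_nat k) * dI (x k) (y k).

Section Metric.
Variables (dI : R -> R -> R) (theta M : R).
Hypothesis HdI0 : forall s t, inI s -> inI t -> 0 <= dI s t.
Hypothesis HM : forall s t, inI s -> inI t -> dI s t <= M.
Hypothesis Htheta : 0 < theta < 1.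

Lemma dset_bounded x y : inOmega x -> inOmega y -> is_upper_bound (dset dI theta x y) M.
Proof.
  intros Hx Hy r [k ->].
  pose proof (pow_le1 theta (Z.abs_nat k) ltac:(lra)).
  pose proof (pow_lt theta (Z.abs_nat k) ltac:(lra)).
  specialize (HdI0 _ _ (Hx k) (Hy k)). specialize (HM _ _ (Hx k) (Hy k)). nra.
Qed.

Lemma d_lub x y : inOmega x -> inOmega y -> is_lub (dset dI theta x y) (dOmega dI theta x y).
Proof.
  intros Hx Hy. unfold dOmega, Rsup. apply epsilon_spec. apply upper_bound_thm.
  - exists M. apply dset_bounded; auto.
  - exists (theta ^ (Z.abs_nat 0) * dI (x 0%Z) (y 0%Z)). exists 0%Z; auto.
Qed.

Lemma d_elem x y k : inOmega x -> inOmega y ->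
  theta ^ (Z.abs_nat k) * dI (x k) (y k) <= dOmega dI theta x y.
Proof. intros Hx Hy. apply (d_lub x y Hx Hy). exists k; auto. Qed.

Lemma d_upper x y u : inOmega x -> inOmega y ->
  (forall k, theta ^ (Z.abs_nat k) * dI (x k) (y k) <= u) -> dOmega dI theta x y <= u.
Proof. intros Hx Hy H. apply (d_lub x y Hx Hy). intros r [k ->]. auto. Qed.

Lemma d_nonneg x y : inOmega x -> inOmega y -> 0 <= dOmega dI theta x y.
Proof.
  intros Hx Hy. pose proof (d_elem x y 0 Hx Hy) as H0. simpl in H0.
  specialize (HdI0 _ _ (Hx 0%Z) (Hy 0%Z)). lra.
Qed.

Lemma d_le_M x y : inOmega x -> inOmega y -> dOmega dI theta x y <= M.
Proof. intros Hx Hy. apply (d_lub x y Hx Hy). apply dset_bounded; auto. Qed.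

Lemma d_sym x y : (forall s t, inI s -> inI t -> dI s t = dI t s) -> inOmega x -> inOmega y ->
  dOmega dI theta x y = dOmega dI theta y x.
Proof.
  intros Hs Hx Hy. apply Rle_antisym; apply d_upper; auto; intros k;
    rewrite Hs by auto; apply d_elem; auto.
Qed.
End Metric.

Lemma Rpower_pos x y : 0 < Rpower x y.
Proof. apply exp_pos. Qed.

Lemma Rpower_lt1 e be : 0 < e < 1 -> 0 < be -> Rpower e be < 1.
Proof.
  intros He Hb. unfold Rpower. rewrite <- exp_0. apply exp_increasing.
  assert (ln e < 0) by (rewrite <- ln_1; apply ln_increasing; lra). nra.
Qed.

Lemma exp_mono a c : a <= c -> exp a <= exp c.
Proof. intros [H|H]; [left; apply exp_increasing; auto|subst; lra]. Qed.

Lemma rpow_nonneg z be : 0 <= rpow z be.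
Proof. unfold rpow. destruct (Rle_dec z 0); [lra|]. pose proof (Rpower_pos z be); lra. Qed.

Lemma rpow_pos z be : 0 < z -> 0 < rpow z be.
Proof. intros. unfold rpow. destruct (Rle_dec z 0); [lra|]. apply Rpower_pos. Qed.

Lemma rpow_mono a c be : 0 < be -> 0 <= a <= c -> rpow a be <= rpow c be.
Proof.
  intros Hb H. unfold rpow. destruct (Rle_dec a 0), (Rle_dec c 0); try lra.
  - pose proof (Rpower_pos c be); lra.
  - apply Rle_Rpower_l; lra.
Qed.

Lemma rpow_mult e d be : 0 < e -> 0 <= d -> rpow (e * d) be = Rpower e be * rpow d be.
Proof.
  intros He Hd. unfold rpow. destruct (Rle_dec d 0).
  - assert (d = 0) by lra. subst. rewrite Rmult_0_r. destruct (Rle_dec 0 0); [ring|lra].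
  - destruct (Rle_dec (e * d) 0); [nra|]. rewrite Rpower_mult_distr; lra.
Qed.

Lemma rpow_small be t : 0 < be -> 0 < t -> exists delta, delta > 0 /\
  forall d, d < delta -> rpow d be < t.
Proof.
  intros Hb Ht. exists (exp (ln t / be)). split; [apply exp_pos|].
  intros d Hd. unfold rpow. destruct (Rle_dec d 0); [lra|].
  unfold Rpower. rewrite <- (exp_ln t Ht). apply exp_increasing.
  assert (Hl : ln d < ln t / be) by (rewrite <- (ln_exp (ln t / be)); apply ln_increasing; lra).
  apply (Rmult_lt_compat_l be) in Hl; auto.
  replace (be * (ln t / be)) with (ln t) in Hl by (field; lra). lra.
Qed.

Section Bfunction.
Variables (s eta be : R).
Hypothesis Hs : 0 <= s.
Hypothesis Heta : 0 < eta < 1.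
Hypothesis Hbe : 0 < be.

Lemma Bexponent_nonneg : 0 <= s * (Rpower eta be / (1 - Rpower eta be)).
Proof.
  pose proof (Rpower_lt1 eta be Heta Hbe). pose proof (Rpower_pos eta be).
  apply Rmult_le_pos; auto. apply Rle_mult_inv_pos; lra.
Qed.

Lemma Bfun_mono a c : 0 <= a <= c -> Bfun s eta be a <= Bfun s eta be c.
Proof.
  intros Hac. apply exp_mono. apply Rmult_le_compat_l; [apply Bexponent_nonneg|].
  apply rpow_mono; auto.
Qed.

Lemma Bfun_ge1 z : 1 <= Bfun s eta be z.
Proof.
  rewrite <- exp_0 at 1. apply exp_mono.
  pose proof Bexponent_nonneg. pose proof (rpow_nonneg z be). nra.
Qed.

(* The functional equation B(z) = exp(s eta^be z^be) B(eta z): this is what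
   makes B compatible with one step of the contracting inverse branches. *)
Lemma Bfun_step z : 0 <= z ->
  Bfun s eta be z = exp (s * Rpower eta be * rpow z be) * Bfun s eta be (eta * z).
Proof.
  intros Hz. pose proof (Rpower_lt1 eta be Heta Hbe).
  unfold Bfun. rewrite rpow_mult, <- exp_plus by lra. f_equal. field. lra.
Qed.

Lemma Bfun_small eps : 0 < eps ->
  exists delta, delta > 0 /\ forall d, d < delta -> Bfun s eta be d < 1 + eps.
Proof.
  intros Heps. set (K := s * (Rpower eta be / (1 - Rpower eta be))).
  assert (HK : 0 <= K) by apply Bexponent_nonneg.
  assert (Hl : 0 < ln (1 + eps)) by (rewrite <- ln_1; apply ln_increasing; lra).
  set (t := ln (1 + eps) / (K + 1)).
  assert (Ht : 0 < t) by (apply Rdiv_lt_0_compat; lra).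
  destruct (rpow_small be t Hbe Ht) as (delta & Hd & Hr). exists delta. split; auto.
  intros d Hdd. specialize (Hr d Hdd). pose proof (rpow_nonneg d be).
  unfold Bfun. fold K. rewrite <- (exp_ln (1 + eps)) by lra. apply exp_increasing.
  assert (K * t < ln (1 + eps)).
  { unfold t. apply (Rmult_lt_reg_r (K + 1)); [lra|].
    replace (K * (ln (1 + eps) / (K + 1)) * (K + 1)) with (K * ln (1 + eps)) by (field; lra).
    nra. }
  assert (K * rpow d be <= K * t) by (apply Rmult_le_compat_l; lra). lra.
Qed.
End Bfunction.

Lemma simple_scale dI theta nu g h s a : simpleBelow dI theta nu g s -> 0 < a ->
  (forall x, inOmega x -> a * g x <= h x) -> simpleBelow dI theta nu h (a * s).
Proof.
  intros (n & c & A & H1 & H2 & H3 & ->) Ha Hh.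
  exists n, (fun i => a * c i), A. split; [|split; [auto|split]].
  - intros i Hi. destruct (H1 i Hi). split; auto. apply Rmult_le_pos; lra.
  - intros x Hx. eapply Rle_trans; [|apply Hh; auto].
    rewrite (natsum_ext _ _ (fun i => a * (c i *
      (if excluded_middle_informative (A i x) then 1 else 0)))) by (intros; ring).
    rewrite natsum_scal. apply Rmult_le_compat_l; [lra|]. apply H3; auto.
  - rewrite <- natsum_scal. apply natsum_ext; intros; ring.
Qed.

Lemma integral_scale dI theta nu g c a : integralIs dI theta nu g c -> 0 < a ->
  integralIs dI theta nu (fun x => a * g x) (a * c).
Proof.
  intros (H0 & Hmeas & [Hub Hlub]) Ha. split; [|split; [|split]].
  - intros x Hx. apply Rmult_le_pos; [lra|auto].
  - intros t. replace (fun x => inOmega x /\ t < a * g x)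
      with (fun x => inOmega x /\ t / a < g x); [apply Hmeas|].
    apply functional_extensionality; intros x. apply propositional_extensionality.
    assert (t / a < g x <-> t < a * g x).
    { split; intros Ht.
      - apply (Rmult_lt_compat_l a) in Ht; auto.
        replace (a * (t / a)) with t in Ht by (field; lra). auto.
      - apply (Rmult_lt_reg_l a); auto. replace (a * (t / a)) with t by (field; lra). auto. }
    tauto.
  - intros s Hs.
    assert (Hg : simpleBelow dI theta nu g (/ a * s)).
    { apply simple_scale with (g := fun x => a * g x); auto.
      - apply Rinv_0_lt_compat; auto.
      - intros x _. right. field. lra. }
    apply Hub, (Rmult_le_compat_l a) in Hg; [|lra].
    replace (a * (/ a * s)) with s in Hg by (field; lra). auto.
  - intros u Hu. assert (Hc : c <= / a * u).
    { apply Hlub. intros s Hs.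
      assert (Hag : simpleBelow dI theta nu (fun x => a * g x) (a * s))
        by (apply simple_scale with (g := g); auto; intros; lra).
      apply Hu, (Rmult_le_compat_l (/ a)) in Hag; [|left; apply Rinv_0_lt_compat; auto].
      replace (/ a * (a * s)) with s in Hag by (field; lra). auto. }
    apply (Rmult_le_compat_l a) in Hc; [|lra].
    replace (a * (/ a * u)) with u in Hc by (field; lra). auto.
Qed.

Lemma borel_inOmega dI theta : borel dI theta inOmega.
Proof. apply borel_open. intros x Hx. split; auto. exists 1. split; [lra|]. auto. Qed.

(* For a probability measure, a pointwise lower bound m >= 0 bounds the
   integral from below (m 1_Omega is a simple function below g). *)
Lemma integral_ge_const dI theta nu g c m : nu inOmega = 1 -> integralIs dI theta nu g c ->
  0 <= m -> (forall x, inOmega x -> m <= g x) -> m <= c.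
Proof.
  intros Hnu (_ & _ & [Hub _]) Hm H. apply Hub.
  exists 1%nat, (fun _ => m), (fun _ x => inOmega x). split; [|split; [|split]].
  - intros i Hi. split; auto. apply borel_inOmega.
  - intros i j x Hi Hj Hij. lia.
  - intros x Hx. simpl. destruct (excluded_middle_informative (inOmega x)); [|tauto].
    specialize (H x Hx). lra.
  - simpl. change (nu (fun x => inOmega x)) with (nu inOmega). rewrite Hnu. ring.
Qed.

(* g is B-Harnack: g x <= B(d(x,y)) g y; this is the defining inequality of
   Delta_f. *)
Definition harnack (dI : R -> R -> R) (theta s eta be : R) (g : pt -> R) : Prop :=
  forall x y, inOmega x -> inOmega y ->
    g x <= Bfun s eta be (dOmega dI theta x y) * g y.

Lemma harnack_scale dI theta s eta be g a : 0 <= a ->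
  harnack dI theta s eta be g -> harnack dI theta s eta be (fun x => a * g x).
Proof.
  intros Ha Hg x y Hx Hy. specialize (Hg x y Hx Hy).
  apply (Rmult_le_compat_l a) in Hg; auto. lra.
Qed.

(* A B-Harnack function with integral c is bounded by K c, where K bounds B
   on the (bounded) range of d: integrate g y >= g x / K over y. *)
Lemma harnack_integral_bound dI theta s eta be nu g c K :
  nu inOmega = 1 -> integralIs dI theta nu g c -> harnack dI theta s eta be g -> 0 < K ->
  (forall x y, inOmega x -> inOmega y -> Bfun s eta be (dOmega dI theta x y) <= K) ->
  forall x, inOmega x -> g x <= K * c.
Proof.
  intros Hnu Hint Hg HK HBK x Hx.
  assert (H0 : forall y, inOmega y -> 0 <= g y) by apply Hint.
  assert (Hc : g x / K <= c).
  { apply (integral_ge_const dI theta nu g c); auto.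
    - apply Rle_mult_inv_pos; auto.
    - intros y Hy. apply (Rmult_le_reg_l K); auto.
      replace (K * (g x / K)) with (g x) by (field; lra).
      eapply Rle_trans; [apply (Hg x y Hx Hy)|].
      apply Rmult_le_compat_r; auto. }
  apply (Rmult_le_compat_l K) in Hc; [|lra].
  replace (K * (g x / K)) with (g x) in Hc by (field; lra). auto.
Qed.

(* A bounded nonnegative B-Harnack function is continuous: |g x - g y| <=
   (B(d(x,y)) - 1) sup g, and B(z) -> 1 as z -> 0. *)
Lemma harnack_continuous dI theta s eta be g G :
  0 <= s -> 0 < eta < 1 -> 0 < be -> 0 < G ->
  (forall x, inOmega x -> 0 <= g x) -> (forall x, inOmega x -> g x <= G) ->
  (forall x y, inOmega x -> inOmega y -> dOmega dI theta x y = dOmega dI theta y x) ->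
  harnack dI theta s eta be g -> contOmega dI theta g.
Proof.
  intros Hs He Hb HG H0 HGb Hsym Hg x Hx eps Heps.
  destruct (Bfun_small s eta be Hs He Hb (eps / G)) as (delta & Hd & HB).
  { apply Rdiv_lt_0_compat; lra. }
  exists delta. split; auto. intros y Hy Hxy.
  specialize (HB _ Hxy). pose proof (Bfun_ge1 s eta be Hs He Hb (dOmega dI theta x y)).
  pose proof (Hg x y Hx Hy) as Hxy'. pose proof (Hg y x Hy Hx) as Hyx.
  rewrite <- Hsym in Hyx by auto.
  set (Bd := Bfun s eta be (dOmega dI theta x y)) in *.
  assert ((Bd - 1) * G < eps).
  { apply (Rmult_lt_compat_r G) in HB; auto.
    replace ((1 + eps / G) * G) with (G + eps) in HB by (field; lra). lra. }
  pose proof (H0 x Hx). pose proof (H0 y Hy). pose proof (HGb x Hx). pose proof (HGb y Hy).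
  assert ((Bd - 1) * g x <= (Bd - 1) * G) by (apply Rmult_le_compat_l; lra).
  assert ((Bd - 1) * g y <= (Bd - 1) * G) by (apply Rmult_le_compat_l; lra).
  apply Rabs_def1; nra.
Qed.

Section TransferOperator.
Variables (dI : R -> R -> R) (theta : R) (b : nat) (br : nat -> R -> R)
  (ptau eta beta M C : R) (f : pt -> R).
Hypothesis HdI0 : forall s t, inI s -> inI t -> 0 <= dI s t.
Hypothesis HdIeq : forall s t, inI s -> inI t -> (dI s t = 0 <-> s = t).
Hypothesis HM : forall s t, inI s -> inI t -> dI s t <= M.
Hypothesis Htheta : 0 < theta < 1.
Hypothesis Hb : (1 <= b)%nat.
Hypothesis Hbr_in : forall i t, (i < b)%nat -> inI t -> inI (br i t).
Hypothesis Hpt : inI ptau.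
Hypothesis Heta : 0 < eta < 1.
Hypothesis Hcontr : forall i s t, (i < b)%nat -> inI s -> inI t ->
  dI (br i s) (br i t) <= eta * dI s t.
Hypothesis Hbeta : 0 < beta <= 1.
Hypothesis HC : forall r, holderQuot dI theta beta ptau f r -> r <= C.

Definition hs : R := holderSemi dI theta beta ptau f.

Lemma hs_lub : is_lub (holderQuot dI theta beta ptau f) hs.
Proof.
  unfold hs, holderSemi, Rsup. apply epsilon_spec. apply upper_bound_thm.
  - exists C. auto.
  - exists 0. left; auto.
Qed.

Lemma hs_nonneg : 0 <= hs.
Proof. apply hs_lub. left; auto. Qed.

Lemma f_holder k u v : inOmega u -> inOmega v -> pik ptau k u = u -> pik ptau k v = v ->
  f u - f v <= hs * rpow (dOmega dI theta u v) beta.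
Proof.
  intros Hu Hv Eu Ev. set (duv := dOmega dI theta u v).
  destruct (classic (exists j, u j <> v j)) as [[j Hj]|Hn].
  - assert (Hd : 0 < duv).
    { pose proof (d_elem dI theta M HdI0 HM Htheta u v j Hu Hv).
      pose proof (pow_lt theta (Z.abs_nat j) ltac:(lra)).
      pose proof (HdI0 _ _ (Hu j) (Hv j)).
      assert (dI (u j) (v j) <> 0) by (intros E; apply Hj; apply HdIeq; auto).
      assert (0 < theta ^ Z.abs_nat j * dI (u j) (v j)) by (apply Rmult_lt_0_compat; lra).
      unfold duv; lra. }
    pose proof (rpow_pos _ beta Hd) as Hr.
    assert (Hq : Rabs (f (pik ptau k u) - f (pik ptau k v)) / rpow duv beta <= hs).
    { apply hs_lub. right. exists k, u, v. split; [|split; [|split; [exists j|]]]; auto. }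
    rewrite Eu, Ev in Hq. apply (Rmult_le_compat_r (rpow duv beta)) in Hq; [|lra].
    unfold Rdiv in Hq. rewrite Rmult_assoc, Rinv_l, Rmult_1_r in Hq by lra.
    pose proof (Rle_abs (f u - f v)). lra.
  - assert (u = v).
    { apply functional_extensionality; intros j. apply NNPP; intros E; apply Hn; eauto. }
    subst. pose proof hs_nonneg. pose proof (rpow_nonneg duv beta). nra.
Qed.

Lemma branchPt_in k c x : validc b (idxk k) c -> inOmega x -> inOmega (branchPt br ptau k c x).
Proof.
  intros Hc Hx j. unfold branchPt, pik. destruct (Z.leb (Z.abs j) (Z.of_nat k)) eqn:E; auto.
  apply Hbr_in; auto. apply Hc. apply In_idxk. apply Z.leb_le; auto.
Qed.

Lemma pik_branchPt k c x : pik ptau k (branchPt br ptau k c x) = branchPt br ptau k c x.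
Proof.
  apply functional_extensionality; intros j. unfold branchPt, pik.
  destruct (Z.leb (Z.abs j) (Z.of_nat k)); auto.
Qed.

Lemma branchPt_contract k c x y : validc b (idxk k) c -> inOmega x -> inOmega y ->
  dOmega dI theta (branchPt br ptau k c x) (branchPt br ptau k c y)
    <= eta * dOmega dI theta x y.
Proof.
  intros Hc Hx Hy. apply (d_upper dI theta M); auto; try (apply branchPt_in; auto).
  intros j. pose proof (d_elem dI theta M HdI0 HM Htheta x y j Hx Hy).
  pose proof (pow_lt theta (Z.abs_nat j) ltac:(lra)).
  pose proof (d_nonneg dI theta M HdI0 HM Htheta x y Hx Hy).
  unfold branchPt, pik. destruct (Z.leb (Z.abs j) (Z.of_nat k)) eqn:E.
  - assert (Hcj : (c j < b)%nat) by (apply Hc; apply In_idxk; apply Z.leb_le; auto).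
    pose proof (Hcontr (c j) (x j) (y j) Hcj (Hx j) (Hy j)).
    assert (theta ^ Z.abs_nat j * dI (br (c j) (x j)) (br (c j) (y j)) <=
            theta ^ Z.abs_nat j * (eta * dI (x j) (y j))) by (apply Rmult_le_compat_l; lra).
    nra.
  - replace (dI ptau ptau) with 0 by (symmetry; apply HdIeq; auto). nra.
Qed.

(* The key estimate: each summand exp(f(zeta_x)) Phi(zeta_x) of P_k Phi is
   B-Harnack in x, by the functional equation of B. *)
Lemma branch_term_harnack (Phi : pt -> R) k c x y :
  validc b (idxk k) c -> inOmega x -> inOmega y ->
  (forall u, inOmega u -> 0 <= Phi u) -> harnack dI theta hs eta beta Phi ->
  exp (f (branchPt br ptau k c x)) * Phi (branchPt br ptau k c x) <=
  Bfun hs eta beta (dOmega dI theta x y) *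
    (exp (f (branchPt br ptau k c y)) * Phi (branchPt br ptau k c y)).
Proof.
  intros Hc Hx Hy HP0 HPB.
  pose proof (branchPt_in k c x Hc Hx) as Hbx. pose proof (branchPt_in k c y Hc Hy) as Hby.
  pose proof (branchPt_contract k c x y Hc Hx Hy) as Hdb.
  pose proof (f_holder k _ _ Hbx Hby (pik_branchPt k c x) (pik_branchPt k c y)) as Hf.
  set (bx := branchPt br ptau k c x) in *. set (by' := branchPt br ptau k c y) in *.
  pose proof (d_nonneg dI theta M HdI0 HM Htheta x y Hx Hy) as Hdx.
  pose proof (d_nonneg dI theta M HdI0 HM Htheta bx by' Hbx Hby) as Hdb0.
  set (dx := dOmega dI theta x y) in *. set (db := dOmega dI theta bx by') in *.
  pose proof hs_nonneg as Hs.
  assert (Hexp : exp (f bx) <= exp (hs * Rpower eta beta * rpow dx beta) * exp (f by')).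
  { rewrite <- exp_plus. apply exp_mono.
    assert (rpow db beta <= Rpower eta beta * rpow dx beta)
      by (rewrite <- rpow_mult by lra; apply rpow_mono; lra).
    assert (hs * rpow db beta <= hs * (Rpower eta beta * rpow dx beta))
      by (apply Rmult_le_compat_l; lra).
    lra. }
  assert (HPhi : Phi bx <= Bfun hs eta beta (eta * dx) * Phi by').
  { eapply Rle_trans; [apply (HPB bx by' Hbx Hby)|].
    apply Rmult_le_compat_r; [apply HP0; auto|]. apply Bfun_mono; auto; lra. }
  rewrite (Bfun_step hs eta beta) by (auto; lra).
  pose proof (exp_pos (f bx)). pose proof (HP0 bx Hbx).
  eapply Rle_trans; [apply Rmult_le_compat; [lra|lra|apply Hexp|apply HPhi]|].
  right; ring.
Qed.

Lemma Pk_weight_pos k : 0 < / INR b ^ (2 * k + 1).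
Proof. apply Rinv_0_lt_compat, pow_lt, lt_0_INR. lia. Qed.

Lemma Pk_harnack Phi k : (forall u, inOmega u -> 0 <= Phi u) ->
  harnack dI theta hs eta beta Phi -> harnack dI theta hs eta beta (Pk b br ptau f k Phi).
Proof.
  intros HP0 HPB x y Hx Hy. unfold Pk.
  rewrite <- Rmult_assoc, (Rmult_comm _ (/ _)), Rmult_assoc.
  apply Rmult_le_compat_l; [left; apply Pk_weight_pos|].
  rewrite <- sumChoices_scal. apply sumChoices_le. intros c Hc.
  apply branch_term_harnack; auto.
Qed.

(* P_k is an average over the b^(2k+1) branches, so it preserves lower bounds
   on exp(f) Phi. *)
Lemma Pk_ge Phi k x m : inOmega x ->
  (forall u, inOmega u -> m <= exp (f u) * Phi u) -> m <= Pk b br ptau f k Phi x.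
Proof.
  intros Hx Hm. unfold Pk. pose proof (Pk_weight_pos k) as Hw.
  pose proof (sumChoices_lower b (idxk k)
    (fun c => exp (f (branchPt br ptau k c x)) * Phi (branchPt br ptau k c x)) m) as Hsum.
  rewrite length_idxk in Hsum.
  replace m with (/ INR b ^ (2 * k + 1) * (INR b ^ (2 * k + 1) * m)) at 1
    by (field; apply Rgt_not_eq, pow_lt, lt_0_INR; lia).
  apply Rmult_le_compat_l; [lra|]. apply Hsum. intros c Hc. apply Hm, branchPt_in; auto.
Qed.

Lemma P_nonneg Phi PPhi : (forall u, inOmega u -> 0 <= Phi u) ->
  (forall x, inOmega x -> Un_cv (fun k => Pk b br ptau f k Phi x) (PPhi x)) ->
  forall x, inOmega x -> 0 <= PPhi x.
Proof.
  intros HP0 HPP x Hx. apply (cv_lower _ _ 0 (HPP x Hx)). intros k. apply Pk_ge; auto.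
  intros u Hu. apply Rmult_le_pos; [left; apply exp_pos|auto].
Qed.

Lemma P_harnack Phi PPhi : (forall u, inOmega u -> 0 <= Phi u) ->
  harnack dI theta hs eta beta Phi ->
  (forall x, inOmega x -> Un_cv (fun k => Pk b br ptau f k Phi x) (PPhi x)) ->
  harnack dI theta hs eta beta PPhi.
Proof.
  intros HP0 HPB HPP x y Hx Hy. apply (cv_le _ _ _ _ _ (HPP x Hx) (HPP y Hy)).
  intros k. apply Pk_harnack; auto.
Qed.

Lemma lambda_pos nu P1 lambda Mf : nu inOmega = 1 ->
  (forall u, inOmega u -> Rabs (f u) <= Mf) ->
  (forall x, inOmega x -> Un_cv (fun k => Pk b br ptau f k (fun _ => 1) x) (P1 x)) ->
  integralIs dI theta nu P1 lambda -> 0 < lambda.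
Proof.
  intros Hnu HMf HP1 Hlam. pose proof (exp_pos (- Mf)).
  enough (exp (- Mf) <= lambda) by lra.
  apply (integral_ge_const dI theta nu P1 lambda); auto; [lra|].
  intros x Hx. apply (cv_lower _ _ _ (HP1 x Hx)). intros k. apply Pk_ge; auto.
  intros u Hu. rewrite Rmult_1_r. apply exp_mono.
  pose proof (Rle_abs (- f u)). rewrite Rabs_Ropp in *. specialize (HMf u Hu). lra.
Qed.

Lemma Bfun_diam x y : inOmega x -> inOmega y ->
  Bfun hs eta beta (dOmega dI theta x y) <= Bfun hs eta beta M.
Proof.
  intros Hx Hy. apply Bfun_mono; try lra; [apply hs_nonneg|].
  split; [apply (d_nonneg dI theta M)|apply (d_le_M dI theta M)]; auto.
Qed.
End TransferOperator.
Theorem mainTheorem4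
  (dI : R -> R -> R) (theta : R) (tau : R -> R) (b : nat) (br : nat -> R -> R)
  (ptau eta beta : R) (f : pt -> R) (nu0 : (pt -> Prop) -> R) (lambda : R)
  (P1 : pt -> R)
  (HdI0 : forall s t, inI s -> inI t -> 0 <= dI s t)
  (HdIeq : forall s t, inI s -> inI t -> (dI s t = 0 <-> s = t))
  (HdIsym : forall s t, inI s -> inI t -> dI s t = dI t s)
  (HdItri : forall s t u, inI s -> inI t -> inI u -> dI s u <= dI s t + dI t u)
  (HdIbd : exists M, forall s t, inI s -> inI t -> dI s t <= M)
  (Htheta : 0 < theta < 1)
  (Htau : forall t, inI t -> inI (tau t))
  (Hb : (1 <= b)%nat)
  (Hbr_in : forall i t, (i < b)%nat -> inI t -> inI (br i t))
  (Hbr_inv : forall i t, (i < b)%nat -> inI t -> tau (br i t) = t)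
  (Hbr_cover : forall s, inI s -> exists i, (i < b)%nat /\ br i (tau s) = s)
  (Hbr_inj : forall i j t, (i < b)%nat -> (j < b)%nat -> inI t ->
                br i t = br j t -> i = j)
  (Hptau : inI ptau /\ tau ptau = ptau)
  (Heta : 0 < eta < 1)
  (Hcontr : forall i s t, (i < b)%nat -> inI s -> inI t ->
               dI (br i s) (br i t) <= eta * dI s t)
  (Hbeta : 0 < beta <= 1)
  (Hf : inCspace dI theta beta ptau f)
  (Hnu0 : probMeasure dI theta nu0)
  (HP1 : forall x, inOmega x -> Un_cv (fun k => Pk b br ptau f k (fun _ => 1) x) (P1 x))
  (Hlambda : integralIs dI theta nu0 P1 lambda)
  (Heig : forall (Phi PPhi : pt -> R) (c : R),
     contOmega dI theta Phi -> boundedOmega Phi ->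
     (forall x, inOmega x -> Un_cv (fun k => Pk b br ptau f k Phi x) (PPhi x)) ->
     integralIs dI theta nu0 Phi c ->
     integralIs dI theta nu0 PPhi (lambda * c)) :
  forall Phi PPhi : pt -> R,
    inDelta dI theta beta ptau eta f nu0 Phi ->
    (forall x, inOmega x -> Un_cv (fun k => Pk b br ptau f k Phi x) (PPhi x)) ->
    inDelta dI theta beta ptau eta f nu0 (fun x => / lambda * PPhi x).
Proof.
  intros Phi PPhi (HPc & HP0 & HPi & HPB) HPP.
  destruct HdIbd as [M HM], Hf as (_ & [Mf HMf] & [C HC]), Hptau as [Hpt _],
    Hnu0 as (_ & Hnu1 & _).
  change (holderSemi dI theta beta ptau f) with (hs dI theta ptau beta f) in *.
  set (s := hs dI theta ptau beta f) in *.
  assert (Hs : 0 <= s) by exact (hs_nonneg dI theta ptau beta C f HC).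
  set (K := Bfun s eta beta M).
  assert (HK : forall x y, inOmega x -> inOmega y -> Bfun s eta beta (dOmega dI theta x y) <= K)
    by (intros; apply (Bfun_diam dI theta ptau eta beta M C f); auto).
  assert (HK0 : 0 < K) by (pose proof (Bfun_ge1 s eta beta Hs Heta ltac:(lra) M); unfold K; lra).
  assert (HQ : harnack dI theta s eta beta PPhi)
    by (eapply (P_harnack dI theta b br ptau eta beta M C f); eauto).
  assert (HQ0 : forall x, inOmega x -> 0 <= PPhi x)
    by (eapply (P_nonneg b br ptau f); eauto).
  assert (Hlam : 0 < lambda) by (eapply (lambda_pos dI theta b br ptau f); eauto).
  assert (HPbd : boundedOmega Phi).
  { exists (K * 1). intros x Hx. rewrite Rabs_right by (apply Rle_ge; auto).
    apply (harnack_integral_bound dI theta s eta beta nu0); auto. }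
  assert (HI : integralIs dI theta nu0 (fun x => / lambda * PPhi x) 1).
  { replace 1 with (/ lambda * (lambda * 1)) by (field; lra).
    apply integral_scale; [apply (Heig Phi); auto|apply Rinv_0_lt_compat; lra]. }
  assert (Hinv : 0 <= / lambda) by (left; apply Rinv_0_lt_compat; lra).
  assert (Hg := harnack_scale dI theta s eta beta PPhi (/ lambda) Hinv HQ).
  split; [|split; [|split; [exact HI|exact Hg]]].
  - apply (harnack_continuous dI theta s eta beta _ (K * 1)); auto; try lra.
    + intros x Hx. apply Rmult_le_pos; auto.
    + apply (harnack_integral_bound dI theta s eta beta nu0); auto.
    + intros x y Hx Hy. apply (d_sym dI theta M); auto.
  - intros x Hx. apply Rmult_le_pos; auto.
Qed.
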